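(* Let $(D^n,\omega_h^n)_{n\in\mathbb N}$ be a solution of the discrete linearized scheme described in the context, with discrete free energy $\mathcal E^n$. Then for all $n\ge0$, $$ \frac{\mathcal E^{n+1}-\mathcal E^n}{\Delta t}+\Delta t\,\mathcal R_h^n=-\frac{1}{\varepsilon\tau_0}\sum_{k=1}^{N_H}k\,\|D^{n+1}_k\|_{l^2(\mathbb T)}^2, $$ where $$ \mathcal R_h^n=\frac12\Big(\Big\|\frac{D^{n+1}-D^n}{\Delta t}\Big\|_{l^2}^2+\Big\|\frac{\mathcal A_h(\omega_h^{n+1}-\omega_h^n)}{\Delta t\,\sqrt{\rho}_\infty}\Big\|_{l^2(\mathbb T)}^2\Big)\ge0 . $$
   Context: Discrete setting. Fix $T_0>0$, $\varepsilon>0$, $\tau_0>0$, a time step $\Delta t>0$, an integer $N_H\ge1$, and an interval $(a,b)$ with periodic boundary conditions (a torus $\mathbb T$). Take a mesh $a=x_{1/2}<x_1<x_{3/2}<\dots<x_{N_x}<x_{N_x+1/2}=b$, cells $K_j=(x_{j-1/2},x_{j+1/2})$, $\Delta x_j=x_{j+1/2}-x_{j-1/2}$, $j\in\mathcal J=\{1,\dots,N_x\}$; cell indices are understood periodically modulo $N_x$. For grid functions $D=(D_j)_{j\in\mathcal J}$, $G=(G_j)_{j\in\mathcal J}$ set $\langle D,G\rangle_{l^2(\mathbb T)}=\sum_{j\in\mathcal J}\Delta x_j D_jG_j$ and $\|D\|_{l^2(\mathbb T)}^2=\langle D,D\rangle_{l^2(\mathbb T)}$; products and quotients of grid functions are taken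 componentwise. $(\rho_{\infty,j})_{j\in\mathcal J}$ are positive numbers (approximations of the equilibrium density), and $\sqrt{\rho}_\infty$ denotes the grid function $(\sqrt{\rho_{\infty,j}})_j$. Define $E_{\infty,j}=\frac{2T_0}{\sqrt{\rho_{\infty,j}}}\,\frac{\sqrt{\rho_{\infty,j+1}}-\sqrt{\rho_{\infty,j-1}}}{2\Delta x_j}$ and the discrete operators $$ (\mathcal A_hD)_j=\sqrt{T_0}\,\frac{D_{j+1}-D_{j-1}}{2\Delta x_j}-\frac{E_{\infty,j}}{2\sqrt{T_0}}D_j,\qquad (\mathcal A_h^\star D)_j=-\sqrt{T_0}\,\frac{D_{j+1}-D_{j-1}}{2\Delta x_j}-\frac{E_{\infty,j}}{2\sqrt{T_0}}D_j , $$ which are adjoint with respect to $\langle\cdot,\cdot\rangle_{l^2(\mathbb T)}$. Discrete linearized scheme: $D^n=(D^n_k)_{0\le k\le N_H}$, each $D^n_k$ a grid function, and grid functions $\omega^n_h$, satisfy for all $n\ge0$ $$ \varepsilon\frac{D^{n+1}_1-D^n_1}{\Delta t}+\mathcal A_hD^{n+1}_0-\sqrt2\,\mathcal A_h^\star D^{n+1}_2+\mathcal A_h\omega_h^{n+1}=-\frac1{\tau_0}D^{n+1}_1, $$ $$ \varepsilon\frac{D^{n+1}_k-D^n_k}{\Delta t}+\sqrt k\,\mathcal A_hD^{n+1}_{k-1}-\sqrt{k+1}\,\mathcal A_h^\star D^{n+1}_{k+1}=-\frac{k}{\tau_0}D^{n+1}_k,\quad k\in\{0,\dots,N_H\}\setminus\{1\},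 $$ with the convention $D^{n+1}_{-1}=D^{n+1}_{N_H+1}=0$, and for all $n\ge0$ (including $n=0$ for $\omega_h^0$) $$ \mathcal A_h^\star\big(\rho_\infty^{-1}\mathcal A_h\omega_h^{n}\big)=D^{n}_0-\sqrt{\rho}_\infty,\qquad \sum_{j\in\mathcal J}\Delta x_j\,\omega^{n}_{h,j}\,\rho_{\infty,j}^{-1/2}=0 . $$ Discrete equilibrium: $D_{\infty,0}=\sqrt{\rho}_\infty$, $D_{\infty,k}=0$ for $1\le k\le N_H$. Discrete free energy: $$ \mathcal E^n=\frac12\Big(\|D^n-D_\infty\|_{l^2}^2+\Big\|\frac{\mathcal A_h\omega_h^n}{\sqrt{\rho}_\infty}\Big\|_{l^2(\mathbb T)}^2\Big),\qquad \|D\|_{l^2}^2=\sum_{k=0}^{N_H}\|D_k\|_{l^2(\mathbb T)}^2 . $$ *)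

From HB Require Import structures.
From mathcomp Require Import all_boot all_order all_algebra.
Set Implicit Arguments. Unset Strict Implicit. Unset Printing Implicit Defensive.
Import Order.TTheory GRing.Theory Num.Theory.
Local Open Scope ring_scope.

Section Discrete.
Variables (R : rcfType) (Nx : nat).

(* grid functions on the cells K_j, j in 'I_Nx (0-based); periodic shifts *)
Definition grid := 'I_Nx -> R.
Definition jnext (j : 'I_Nx) : 'I_Nx := ordS j.
Definition jprev (j : 'I_Nx) : 'I_Nx := ord_pred j.

Definition dotT (dx : grid) (D G : grid) : R := \sum_(j < Nx) dx j * D j * G j.
Definition normT2 (dx : grid) (D : grid) : R := dotT dx D D.

Definition Einf (T0 : R) (dx rho : grid) (j : 'I_Nx) : R :=
  (2 * T0) / Num.sqrt (rho j) *
  ((Num.sqrt (rho (jnext j)) - Num.sqrt (rho (jprev j))) / (2 * dx j)).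

Definition Ah (T0 : R) (dx rho : grid) (D : grid) : grid := fun j =>
  Num.sqrt T0 * ((D (jnext j) - D (jprev j)) / (2 * dx j))
  - Einf T0 dx rho j / (2 * Num.sqrt T0) * D j.

Definition Ahstar (T0 : R) (dx rho : grid) (D : grid) : grid := fun j =>
  - (Num.sqrt T0 * ((D (jnext j) - D (jprev j)) / (2 * dx j)))
  - Einf T0 dx rho j / (2 * Num.sqrt T0) * D j.

Definition gsub (D G : grid) : grid := fun j => D j - G j.
Definition gscale (c : R) (D : grid) : grid := fun j => c * D j.
Definition gdiv (D G : grid) : grid := fun j => D j / G j.
Definition gsqrt (D : grid) : grid := fun j => Num.sqrt (D j).

Definition Dinf (rho : grid) (k : nat) : grid :=
  if k == 0%N then gsqrt rho else fun _ => 0.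

(* discrete free energy; D : nat (time) -> nat (Hermite index k) -> grid *)
Definition energy (T0 : R) (NH : nat) (dx rho : grid)
  (D : nat -> nat -> grid) (om : nat -> grid) (n : nat) : R :=
  1 / 2 * (\sum_(k < NH.+1) normT2 dx (gsub (D n k) (Dinf rho k))
           + normT2 dx (gdiv (Ah T0 dx rho (om n)) (gsqrt rho))).

Definition Rh (T0 dt : R) (NH : nat) (dx rho : grid)
  (D : nat -> nat -> grid) (om : nat -> grid) (n : nat) : R :=
  1 / 2 * (\sum_(k < NH.+1) normT2 dx (gscale dt^-1 (gsub (D n.+1 k) (D n k)))
           + normT2 dx (gdiv (Ah T0 dx rho (gsub (om n.+1) (om n)))
                             (gscale dt (gsqrt rho)))).

End Discrete.

(* Test the k-th equation of the implicit step n -> n+1 against the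
   deviation D^{n+1}_k - D_{inf,k} from equilibrium and sum over k.
   - Since A_h and A_h^* are adjoint (summation by parts on the torus) and
     A_h kills sqrt(rho_inf), the couplings between consecutive modes cancel
     in the sum (skew-symmetry of the Hermite hierarchy).
   - The omega-coupling in the k = 1 equation is rewritten with the k = 0
     equation and the Poisson equation: it becomes
     eps/dt < a^{n+1} - a^n, a^{n+1} >, where a^n = A_h omega^n / sqrt(rho_inf).
   - The relaxation terms give the dissipation -1/tau0 sum_k k ||D_k||^2.
   - The polarization identity 2<x - y, x> = |x|^2 - |y|^2 + |x - y|^2 turns
     the time-difference terms into E^{n+1} - E^n + dt^2 R_h^n. *)
From HB Require Import structures.
From mathcomp Require Import all_boot all_order all_algebra.
From mathcomp Require Import ring lra.
Set Implicit Arguments. Unset Strict Implicit. Unset Printing Implicit Defensive.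
Import Order.TTheory GRing.Theory Num.Theory.
Local Open Scope ring_scope.

Section GridInnerProduct.
Variables (R : rcfType) (Nx : nat) (dx : 'I_Nx -> R).

Lemma dotT_ext (F G E E' : 'I_Nx -> R) :
  F =1 G -> E =1 E' -> dotT dx F E = dotT dx G E'.
Proof. by move=> eFG eEE; apply: eq_bigr => j _; rewrite eFG eEE. Qed.

Lemma normT2_ext (F G : 'I_Nx -> R) : F =1 G -> normT2 dx F = normT2 dx G.
Proof. by move=> eFG; exact: dotT_ext. Qed.

Lemma dotTC (F G : 'I_Nx -> R) : dotT dx F G = dotT dx G F.
Proof. by apply: eq_bigr => j _; ring. Qed.

Lemma dotTZl (c : R) (F E : 'I_Nx -> R) :
  dotT dx (fun j => c * F j) E = c * dotT dx F E.
Proof. by rewrite /dotT mulr_sumr; apply: eq_bigr => j _; ring. Qed.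

Lemma dotTZr (c : R) (F E : 'I_Nx -> R) :
  dotT dx F (fun j => c * E j) = c * dotT dx F E.
Proof. by rewrite /dotT mulr_sumr; apply: eq_bigr => j _; ring. Qed.

Lemma normT2Z (c : R) (F : 'I_Nx -> R) :
  normT2 dx (gscale c F) = c ^+ 2 * normT2 dx F.
Proof. by rewrite /normT2 /dotT mulr_sumr; apply: eq_bigr => j _; rewrite /gscale; ring. Qed.

Lemma dotT_test4 (a b c e : R) (F1 F2 F3 F4 G E : 'I_Nx -> R) :
  (forall j, a * F1 j + b * F2 j - c * F3 j + e * F4 j = G j) ->
  a * dotT dx F1 E + b * dotT dx F2 E - c * dotT dx F3 E + e * dotT dx F4 E
  = dotT dx G E.
Proof.
move=> eG; rewrite /dotT !mulr_sumr -big_split -sumrB -big_split.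
by apply: eq_bigr => j _ /=; rewrite -eG; ring.
Qed.

Lemma dotT_polar (F G : 'I_Nx -> R) :
  normT2 dx F - normT2 dx G + normT2 dx (gsub F G) = 2 * dotT dx (gsub F G) F.
Proof.
rewrite /normT2 /dotT -sumrB -big_split mulr_sumr.
by apply: eq_bigr => j _ /=; rewrite /gsub; ring.
Qed.

Hypothesis dx_gt0 : forall j, 0 < dx j.

Lemma normT2_ge0 (F : 'I_Nx -> R) : 0 <= normT2 dx F.
Proof.
by apply: sumr_ge0 => j _; rewrite -mulrA (mulr_ge0 (ltW _)) // -expr2 sqr_ge0.
Qed.

End GridInnerProduct.

Section DiscreteOperators.
Variables (R : rcfType) (Nx : nat) (T0 : R) (dx rho : 'I_Nx -> R).
Hypothesis dx_gt0 : forall j, 0 < dx j.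
Hypothesis rho_gt0 : forall j, 0 < rho j.
Hypothesis T0_gt0 : 0 < T0.

Lemma sqrtT0_neq0 : Num.sqrt T0 != 0.
Proof. by rewrite sqrtr_eq0 -ltNge. Qed.

Lemma sqrt_rho_neq0 j : Num.sqrt (rho j) != 0.
Proof. by rewrite sqrtr_eq0 -ltNge. Qed.

Lemma sum_next_shift (F G : 'I_Nx -> R) :
  \sum_j F (jnext j) * G j = \sum_j F j * G (jprev j).
Proof.
rewrite (reindex_inj (@ord_pred_inj Nx)) /=.
by apply: eq_bigr => j _; rewrite /jnext /jprev ord_predK.
Qed.

Lemma sum_prev_shift (F G : 'I_Nx -> R) :
  \sum_j F (jprev j) * G j = \sum_j F j * G (jnext j).
Proof.
rewrite (reindex_inj (@ordS_inj Nx)) /=.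
by apply: eq_bigr => j _; rewrite /jnext /jprev ordSK.
Qed.

(* A_h^* is the adjoint of A_h for the weighted l^2(T) inner product:
   the dx_j weights cancel the 1/(2 dx_j) of the centred difference, so the
   difference part is skew by summation by parts on the torus. *)
Lemma Ah_adjoint (F G : 'I_Nx -> R) :
  dotT dx (Ah T0 dx rho F) G = dotT dx F (Ahstar T0 dx rho G).
Proof.
pose c := Num.sqrt T0 / 2.
pose z j := dx j * (Einf T0 dx rho j / (2 * Num.sqrt T0)).
have dx_neq0 j : dx j != 0 by rewrite gt_eqF.
have lhs j : dx j * Ah T0 dx rho F j * G j
    = c * (F (jnext j) * G j) - c * (F (jprev j) * G j) - z j * F j * G j.
  by rewrite /Ah /c /z; field; rewrite dx_neq0 sqrtT0_neq0 ?pnatr_eq0.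
have rhs j : dx j * F j * Ahstar T0 dx rho G j
    = c * (F j * G (jprev j)) - c * (F j * G (jnext j)) - z j * F j * G j.
  by rewrite /Ahstar /c /z; field; rewrite dx_neq0 sqrtT0_neq0 ?pnatr_eq0.
rewrite /dotT (eq_bigr _ (fun j _ => lhs j)) (eq_bigr _ (fun j _ => rhs j)).
rewrite !sumrB -!mulr_sumr sum_next_shift sum_prev_shift.
by congr (_ - _); rewrite -!sumrB; apply: eq_bigr => j _; ring.
Qed.

Lemma Ah_sub (F G : 'I_Nx -> R) j :
  Ah T0 dx rho (gsub F G) j = Ah T0 dx rho F j - Ah T0 dx rho G j.
Proof. by rewrite /Ah /gsub; ring. Qed.

Lemma Ahstar_sub (F G : 'I_Nx -> R) j :
  Ahstar T0 dx rho (gsub F G) j = Ahstar T0 dx rho F j - Ahstar T0 dx rho G j.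
Proof. by rewrite /Ahstar /gsub; ring. Qed.

(* The equilibrium sqrt(rho_inf) lies in the kernel of A_h: this is how
   E_inf is defined. *)
Lemma Ah_sqrt_rho j : Ah T0 dx rho (gsqrt rho) j = 0.
Proof.
have dx_neq0 : dx j != 0 by rewrite gt_eqF.
have T0_sqr : T0 = Num.sqrt T0 ^+ 2 by rewrite sqr_sqrtr // ltW.
rewrite /Ah /Einf /gsqrt {2}T0_sqr; field.
by rewrite sqrt_rho_neq0 sqrtT0_neq0 dx_neq0.
Qed.

Lemma Ah_deviation (F : 'I_Nx -> R) k j :
  Ah T0 dx rho (gsub F (Dinf rho k)) j = Ah T0 dx rho F j.
Proof.
rewrite Ah_sub /Dinf; case: (k == 0%N); first by rewrite Ah_sqrt_rho subr0.
by rewrite /Ah; ring.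
Qed.

Lemma dotT_rho_weight (F G : 'I_Nx -> R) :
  dotT dx F (fun j => (rho j)^-1 * G j)
  = dotT dx (gdiv F (gsqrt rho)) (gdiv G (gsqrt rho)).
Proof.
apply: eq_bigr => j _; rewrite /gdiv /gsqrt.
by rewrite -{1}(sqr_sqrtr (ltW (rho_gt0 j))); field; rewrite sqrt_rho_neq0.
Qed.

End DiscreteOperators.

Lemma deviation_pos {R : rcfType} {Nx : nat} (rho F : 'I_Nx -> R) {k : nat} :
  k <> 0%N -> gsub F (Dinf rho k) =1 F.
Proof. by move=> /eqP/negbTE k_neq0 j; rewrite /gsub /Dinf k_neq0 subr0. Qed.

Section OneStep.
Variables (R : rcfType) (Nx NH : nat) (T0 eps tau0 dt : R) (dx rho : 'I_Nx -> R).
Hypothesis dx_gt0 : forall j, 0 < dx j.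
Hypothesis rho_gt0 : forall j, 0 < rho j.
Hypothesis T0_gt0 : 0 < T0.
Hypothesis NH_ge1 : (1 <= NH)%N.

(* One implicit step: d = D^{n+1}, p = D^n, w1 = omega^{n+1}, w0 = omega^n. *)
Variables (d p : nat -> 'I_Nx -> R) (w1 w0 : 'I_Nx -> R).

Local Notation A := (Ah T0 dx rho).
Local Notation As := (Ahstar T0 dx rho).
Local Notation dev k := (gsub (d k) (Dinf rho k)).
Local Notation a w := (gdiv (Ah T0 dx rho w) (gsqrt rho)).

Hypothesis step : forall k, (k <= NH)%N -> forall j,
  eps * ((d k j - p k j) / dt)
  + (if k == 0%N then 0 else Num.sqrt k%:R * A (d k.-1) j)
  - (if k == NH then 0 else Num.sqrt k.+1%:R * As (d k.+1) j)
  + (if k == 1%N then A w1 j else 0)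
  = - (k%:R / tau0) * d k j.
Hypothesis poisson1 : forall j,
  As (fun i => (rho i)^-1 * A w1 i) j = d 0%N j - Num.sqrt (rho j).
Hypothesis poisson0 : forall j,
  As (fun i => (rho i)^-1 * A w0 i) j = p 0%N j - Num.sqrt (rho j).

Lemma mode_energy k : (k <= NH)%N ->
  eps / dt * dotT dx (gsub (d k) (p k)) (dev k)
  + (if k == 0%N then 0 else Num.sqrt k%:R) * dotT dx (A (d k.-1)) (dev k)
  - (if k == NH then 0 else Num.sqrt k.+1%:R) * dotT dx (As (d k.+1)) (dev k)
  + (if k == 1%N then 1 else 0) * dotT dx (A w1) (dev k)
  = - (k%:R / tau0) * dotT dx (d k) (dev k).
Proof.
move=> k_le; rewrite -[RHS]dotTZl; apply: dotT_test4 => j.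
rewrite -(step k_le j) /gsub.
by case: (k == 0%N); case: (k == NH); case: (k == 1%N); ring.
Qed.

(* Skew-symmetry of the hierarchy: the couplings to the lower and to the
   higher mode give the same total, namely sum_i sqrt(i+1) <A d_i, d_{i+1}>. *)
Lemma coupling_cancel :
  \sum_(0 <= k < NH.+1)
     ((if k == 0%N then 0 else Num.sqrt k%:R) * dotT dx (A (d k.-1)) (dev k))
  = \sum_(0 <= k < NH.+1)
     ((if k == NH then 0 else Num.sqrt k.+1%:R) * dotT dx (As (d k.+1)) (dev k)).
Proof.
rewrite big_nat_recl // big_nat_recr //= eqxx !mul0r add0r addr0.
apply: eq_big_nat => i /andP[_ i_lt]; rewrite (ltn_eqF i_lt); congr (_ * _).
rewrite (dotT_ext dx (frefl _) (deviation_pos _ _ _)) //.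
by rewrite [RHS]dotTC -Ah_adjoint //; apply: dotT_ext => j //; rewrite Ah_deviation.
Qed.

(* The omega-coupling in the k = 1 equation: the k = 0 equation reads
   eps (d_0 - p_0)/dt = A_h^* d_1, and by the Poisson equations
   d_0 - p_0 = A_h^*(rho^{-1} A_h (w1 - w0)); move A_h across twice. *)
Lemma omega_coupling :
  dotT dx (A w1) (d 1%N) = eps / dt * dotT dx (gsub (a w1) (a w0)) (a w1).
Proof.
pose q := gsub (fun i => (rho i)^-1 * A w1 i) (fun i => (rho i)^-1 * A w0 i).
have As_d1 j : As (d 1%N) j = eps / dt * As q j.
  have := step (leq0n NH) j; rewrite eq_sym (negbTE (lt0n_neq0 NH_ge1)) /= sqrtr1.
  by rewrite /q Ahstar_sub poisson1 poisson0; lra.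
have q_weight : q =1 (fun i => (rho i)^-1 * A (gsub w1 w0) i).
  by move=> i; rewrite Ah_sub /q /gsub; ring.
rewrite Ah_adjoint // (dotT_ext dx (frefl _) As_d1) dotTZr -Ah_adjoint //.
rewrite (dotT_ext dx (frefl _) q_weight) dotT_rho_weight // dotTC.
by congr (_ * _); apply: dotT_ext => j //; rewrite /gdiv /gsub Ah_sub mulrBl.
Qed.

(* Only the modes k >= 1 relax; there the deviation is the mode itself. *)
Lemma relaxation :
  \sum_(0 <= k < NH.+1) (- (k%:R / tau0) * dotT dx (d k) (dev k))
  = - (1 / tau0) * \sum_(1 <= k < NH.+1) k%:R * normT2 dx (d k).
Proof.
rewrite big_ltn // mul0r oppr0 mul0r add0r mulr_sumr.
apply: eq_big_nat => k /andP[k_ge1 _].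
rewrite (dotT_ext dx (frefl _) (deviation_pos _ _ _)); last by case: k k_ge1.
by rewrite /normT2; ring.
Qed.

Lemma one_step_balance :
  eps / dt * (\sum_(k < NH.+1) dotT dx (gsub (d k) (p k)) (dev k)
              + dotT dx (gsub (a w1) (a w0)) (a w1))
  = - (1 / tau0) * \sum_(1 <= k < NH.+1) k%:R * normT2 dx (d k).
Proof.
have tested : \sum_(0 <= k < NH.+1)
  (eps / dt * dotT dx (gsub (d k) (p k)) (dev k)
   + (if k == 0%N then 0 else Num.sqrt k%:R) * dotT dx (A (d k.-1)) (dev k)
   - (if k == NH then 0 else Num.sqrt k.+1%:R) * dotT dx (As (d k.+1)) (dev k)
   + (if k == 1%N then 1 else 0) * dotT dx (A w1) (dev k))
  = \sum_(0 <= k < NH.+1) (- (k%:R / tau0) * dotT dx (d k) (dev k)).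
  by apply: eq_big_nat => k /andP[_ k_lt]; apply: mode_energy; rewrite -ltnS.
have only_k1 : \sum_(0 <= k < NH.+1)
    ((if k == 1%N then 1 else 0) * dotT dx (A w1) (dev k))
  = dotT dx (A w1) (d 1%N).
  rewrite big_ltn // big_ltn ?ltnS // mul0r add0r mul1r.
  rewrite big_nat_cond big1 ?addr0 => [|[|[|i]] //= _]; last by rewrite mul0r.
  by apply: dotT_ext => j //; exact: deviation_pos.
rewrite big_split sumrB big_split /= coupling_cancel only_k1 relaxation in tested.
by rewrite -tested omega_coupling -mulr_sumr !big_mkord; ring.
Qed.

End OneStep.

Section EnergyIdentity.
Variables (R : rcfType) (Nx NH : nat) (T0 dt : R) (dx rho : 'I_Nx -> R).
Variables (D : nat -> nat -> 'I_Nx -> R) (om : nat -> 'I_Nx -> R).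
Hypothesis dx_gt0 : forall j, 0 < dx j.
Hypothesis rho_gt0 : forall j, 0 < rho j.
Hypothesis dt_neq0 : dt != 0.

Local Notation a w := (gdiv (Ah T0 dx rho w) (gsqrt rho)).

Lemma Rh_ge0 n : 0 <= Rh T0 dt NH dx rho D om n.
Proof.
rewrite /Rh mulr_ge0 ?divr_ge0 // addr_ge0 ?normT2_ge0 //.
by apply: sumr_ge0 => k _; exact: normT2_ge0.
Qed.

Lemma energy_increment n :
  energy T0 NH dx rho D om n.+1 - energy T0 NH dx rho D om n
  + dt ^+ 2 * Rh T0 dt NH dx rho D om n
  = \sum_(k < NH.+1) dotT dx (gsub (D n.+1 k) (D n k)) (gsub (D n.+1 k) (Dinf rho k))
    + dotT dx (gsub (a (om n.+1)) (a (om n))) (a (om n.+1)).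
Proof.
have modes : \sum_(k < NH.+1) normT2 dx (gsub (D n.+1 k) (Dinf rho k))
    - \sum_(k < NH.+1) normT2 dx (gsub (D n k) (Dinf rho k))
    + \sum_(k < NH.+1) normT2 dx (gsub (D n.+1 k) (D n k))
  = 2 * \sum_(k < NH.+1)
          dotT dx (gsub (D n.+1 k) (D n k)) (gsub (D n.+1 k) (Dinf rho k)).
  rewrite -sumrB -big_split mulr_sumr; apply: eq_bigr => k _ /=.
  have incr : gsub (gsub (D n.+1 k) (Dinf rho k)) (gsub (D n k) (Dinf rho k))
              =1 gsub (D n.+1 k) (D n k) by move=> j; rewrite /gsub; ring.
  by rewrite -(normT2_ext dx incr) dotT_polar (dotT_ext dx incr (frefl _)).
have omega := dotT_polar dx (a (om n.+1)) (a (om n)).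
have omega_incr :
    gdiv (Ah T0 dx rho (gsub (om n.+1) (om n))) (gscale dt (gsqrt rho))
    =1 gscale dt^-1 (gsub (a (om n.+1)) (a (om n))).
  move=> j; rewrite /gdiv /gsub /gscale /gsqrt Ah_sub.
  by field; rewrite dt_neq0 sqrt_rho_neq0.
have modes_incr : \sum_(k < NH.+1) normT2 dx (gscale dt^-1 (gsub (D n.+1 k) (D n k)))
    = dt^-1 ^+ 2 * \sum_(k < NH.+1) normT2 dx (gsub (D n.+1 k) (D n k)).
  by rewrite mulr_sumr; apply: eq_bigr => k _; exact: normT2Z.
rewrite /energy /Rh (normT2_ext dx omega_incr) normT2Z modes_incr.
set C := \sum_(k < NH.+1) normT2 dx (gsub (D n.+1 k) (D n k)) in modes *.
set W := normT2 dx (gsub (a (om n.+1)) (a (om n))) in omega *.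
have -> : dt ^+ 2 * (1 / 2 * (dt^-1 ^+ 2 * C + dt^-1 ^+ 2 * W)) = 1 / 2 * (C + W).
  by field.
lra.
Qed.

End EnergyIdentity.

Theorem proposition3p2 (R : rcfType) (Nx NH : nat)
  (T0 eps tau0 dt : R) (dx rho : 'I_Nx -> R)
  (D : nat -> nat -> 'I_Nx -> R) (om : nat -> 'I_Nx -> R)
  (hT0 : 0 < T0) (heps : 0 < eps) (htau0 : 0 < tau0) (hdt : 0 < dt)
  (hNH : (1 <= NH)%N)
  (hdx : forall j, 0 < dx j) (hrho : forall j, 0 < rho j)
  (* equation for k = 1 (D_{NH+1} = 0 convention if NH = 1) *)
  (eq1 : forall n j,
     eps * ((D n.+1 1%N j - D n 1%N j) / dt)
     + Ah T0 dx rho (D n.+1 0%N) j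
     - (if NH == 1%N then 0
        else Num.sqrt 2%:R * Ahstar T0 dx rho (D n.+1 2%N) j)
     + Ah T0 dx rho (om n.+1) j
     = - (1 / tau0) * D n.+1 1%N j)
  (* equations for k in {0..NH} \ {1}, with D_{-1} = D_{NH+1} = 0 *)
  (eqk : forall n (k : nat), (k <= NH)%N -> k <> 1%N -> forall j,
     eps * ((D n.+1 k j - D n k j) / dt)
     + (if k == 0%N then 0
        else Num.sqrt k%:R * Ah T0 dx rho (D n.+1 k.-1) j)
     - (if k == NH then 0
        else Num.sqrt k.+1%:R * Ahstar T0 dx rho (D n.+1 k.+1) j)
     = - (k%:R / tau0) * D n.+1 k j)
  (* Poisson-type equation for omega, for all n >= 0 *)
  (pois : forall n j,
     Ahstar T0 dx rho (fun i => (rho i)^-1 * Ah T0 dx rho (om n) i) j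
     = D n 0%N j - Num.sqrt (rho j))
  (mean0 : forall n,
     \sum_(j < Nx) dx j * om n j * (Num.sqrt (rho j))^-1 = 0) :
  forall n : nat,
    (energy T0 NH dx rho D om n.+1 - energy T0 NH dx rho D om n) / dt
    + dt * Rh T0 dt NH dx rho D om n
    = - (1 / (eps * tau0)) *
        \sum_(1 <= k < NH.+1) k%:R * normT2 dx (D n.+1 k)
    /\ 0 <= Rh T0 dt NH dx rho D om n.
Proof.
move=> n; have dt_neq0 : dt != 0 by rewrite gt_eqF.
split; last exact: Rh_ge0.
have step : forall k, (k <= NH)%N -> forall j,
    eps * ((D n.+1 k j - D n k j) / dt)
    + (if k == 0%N then 0 else Num.sqrt k%:R * Ah T0 dx rho (D n.+1 k.-1) j)
    - (if k == NH then 0 else Num.sqrt k.+1%:R * Ahstar T0 dx rho (D n.+1 k.+1) j)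
    + (if k == 1%N then Ah T0 dx rho (om n.+1) j else 0)
    = - (k%:R / tau0) * D n.+1 k j.
  move=> k k_le j; case: (k =P 1%N) => [->|k_neq1]; last by rewrite addr0 eqk.
  by rewrite /= sqrtr1 mul1r eq_sym eq1.
(* eps/dt (E^{n+1} - E^n + dt^2 R_h^n) = dissipation; divide by eps/dt. *)
have balance := one_step_balance hdx hrho hT0 hNH step (pois n.+1) (pois n).
rewrite -(energy_increment NH T0 dx D om hrho dt_neq0) in balance.
set dE := energy _ _ _ _ _ _ n.+1 - _ in balance *.
set Rn := Rh _ _ _ _ _ _ _ n in balance *.
have eps_neq0 : eps != 0 by rewrite gt_eqF.
have -> : dE / dt + dt * Rn = eps^-1 * (eps / dt * (dE + dt ^+ 2 * Rn)).
  by field; rewrite eps_neq0 dt_neq0.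
by rewrite balance; field; rewrite eps_neq0 gt_eqF.
Qed.
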